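(* Let $A_1,\dots,A_m\in\mathbb{C}^{d\times k}$ with $k\le d$ be such that the matrix $[A_i]_{i=1}^m$ (the $md\times k$ matrix obtained by stacking $A_1,\dots,A_m$) has rank $k$, and let $B$ be a $k\times k$ Hermitian positive semidefinite matrix. Then $\phi(X):=\log\det\bigl(B+\sum_{i=1}^m A_i^*XA_i\bigr)$ is geodesically convex on $\mathbb{P}_d$.
   Context: $\mathbb{P}_d$ denotes the set of $d\times d$ Hermitian positive definite matrices. For $A,B\in\mathbb{P}_d$ and $t\in[0,1]$, $A\#_tB:=A^{1/2}(A^{-1/2}BA^{-1/2})^tA^{1/2}$. A function $\phi$ on $\mathbb{P}_d$ is geodesically convex if $\phi(A\#_tB)\le(1-t)\phi(A)+t\phi(B)$ for all $A,B\in\mathbb{P}_d$, $t\in[0,1]$. *)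

From HB Require Import structures.
From mathcomp Require Import all_boot all_order all_algebra.
From mathcomp Require Import sesquilinear spectral.
From mathcomp Require Import complex.
From mathcomp Require Import all_classical all_reals.
From mathcomp Require Import exp.
Set Implicit Arguments. Unset Strict Implicit. Unset Printing Implicit Defensive.
Import Order.TTheory GRing.Theory Num.Theory.
Local Open Scope ring_scope.
Local Open Scope sesquilinear_scope.

Definition psdmx (R : realType) (n : nat) (A : 'M[R[i]]_n) : Prop :=
  A \is hermsymmx /\ forall x : 'cV[R[i]]_n, 0 <= (x ^t* *m A *m x) 0 0.

Definition pdmx (R : realType) (n : nat) (A : 'M[R[i]]_n) : Prop :=
  A \is hermsymmx /\
  forall x : 'cV[R[i]]_n, x != 0 -> 0 < (x ^t* *m A *m x) 0 0.

Definition mxpowr (R : realType) (n : nat) (A : 'M[R[i]]_n) (t : R)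
  : 'M[R[i]]_n :=
  invmx (spectralmx A) *m
  diag_mx (\row_j ((complex.Re (spectral_diag A 0 j)) `^ t)%:C%C) *m
  spectralmx A.

(* Weighted geometric mean  A #_t B := A^{1/2} (A^{-1/2} B A^{-1/2})^t A^{1/2}. *)
Definition geomean (R : realType) (n : nat) (A B : 'M[R[i]]_n) (t : R)
  : 'M[R[i]]_n :=
  let Ah := mxpowr A (2^-1) in
  let Aih := mxpowr A (- 2^-1) in
  Ah *m mxpowr (Aih *m B *m Aih) t *m Ah.

Definition geodesically_convex (R : realType) (d : nat)
  (phi : 'M[R[i]]_d -> R) : Prop :=
  forall (A B : 'M[R[i]]_d) (t : R), pdmx A -> pdmx B -> 0 <= t <= 1 ->
    phi (geomean A B t) <= (1 - t) * phi A + t * phi B.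

(* log det of a matrix whose determinant is a positive real number. *)
Definition logdet (R : realType) (n : nat) (M : 'M[R[i]]_n) : R :=
  ln (complex.Re (\det M)).

From HB Require Import structures.
From mathcomp Require Import all_boot all_order all_algebra.
From mathcomp Require Import sesquilinear spectral.
From mathcomp Require Import complex.
From mathcomp Require Import all_classical all_reals.
From mathcomp Require Import exp.
From mathcomp Require Import fingroup perm.
Set Implicit Arguments. Unset Strict Implicit. Unset Printing Implicit Defensive.
Import Order.TTheory GRing.Theory Num.Theory.
Local Open Scope ring_scope.
Local Open Scope sesquilinear_scope.

(* Write X = S^2 and S^-1 Y S^-1 = Q^* diag(c) Q with Q unitary. Then
   X #_s Y = W diag(c^s) W^* with W = S Q^*, so that X, Y and X #_t Y all lie
   on the curve s |-> W diag(c^s) W^* at s = 0, 1, t.  Writing also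
   B = V diag(sigma) V^*, the matrix B + sum_i A_i^* (X #_s Y) A_i is a sum of
   rank-one terms b_l h_l h_l^* whose weights b_l are either sigma_j or c_j^s.
   Expanding the determinant of such a Gram-type matrix as in Cauchy-Binet
   gives det = sum_f a_f y_f^s with a_f >= 0 and y_f > 0, and
   s |-> log sum_f a_f y_f^s is convex by Hoelder's inequality. *)

Definition gram_mx (C : numClosedFieldType) (I : finType) k
    (b : I -> C) (h : I -> 'I_k -> C) : 'M[C]_k :=
  \matrix_(r, c) \sum_l b l * (h l r * (h l c)^*).

Section GramDeterminant.
Variables (C : numClosedFieldType) (I : finType) (k : nat).
Variables (b : I -> C) (h : I -> 'I_k -> C).

Lemma det_gram_ffun : \det (gram_mx b h) =
  \sum_(f : {ffun 'I_k -> I})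
     (\prod_r (b (f r) * h (f r) r)) * (\det (\matrix_(r, c) h (f r) c))^*.
Proof.
rewrite /determinant.
transitivity (\sum_(s : 'S_k) \sum_(f : {ffun 'I_k -> I}) (-1) ^+ s *
   \prod_r (b (f r) * (h (f r) r * (h (f r) (s r))^*))).
  apply: eq_bigr => s _; rewrite (eq_bigr (fun r => \sum_l b l *
    (h l r * (h l (s r))^*))) => [|r _]; last by rewrite mxE.
  by rewrite bigA_distr_bigA /= big_distrr.
rewrite exchange_big /=; apply: eq_bigr => f _.
rewrite rmorph_sum big_distrr /=; apply: eq_bigr => s _.
rewrite rmorphM rmorph_sign rmorph_prod mulrCA -big_split /=; congr (_ * _).
by apply: eq_bigr => r _; rewrite !mxE mulrA.
Qed.

Lemma det_gram_ffun_perm (s : 'S_k) : \det (gram_mx b h) =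
  \sum_(f : {ffun 'I_k -> I}) (-1) ^+ s *
     (\prod_r (b (f (s r)) * h (f (s r)) r)) *
     (\det (\matrix_(r, c) h (f r) c))^*.
Proof.
rewrite det_gram_ffun (reindex_inj (h := fun f : {ffun 'I_k -> I} =>
  [ffun r => f (s r)])) /=; last first.
  move=> f g /ffunP efg; apply/ffunP => r.
  by have := efg (s^-1 r)%g; rewrite !ffunE permKV.
apply: eq_bigr => f _.
have -> : \matrix_(r, c) h ([ffun r => f (s r)] r) c =
    row_perm s (\matrix_(r, c) h (f r) c).
  by apply/matrixP => i j; rewrite !mxE ffunE.
rewrite row_permE det_mulmx det_perm rmorphM rmorph_sign mulrCA mulrA.
by congr (_ * _ * _); apply: eq_bigr => r _; rewrite ffunE.
Qed.

(* Averaging det_gram_ffun_perm over the k! permutations s turns the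
   product of entries [\prod_r h (f (s r)) r] into a determinant. *)
Lemma det_gram : k`!%:R * \det (gram_mx b h) =
  \sum_(f : {ffun 'I_k -> I})
     (\prod_r b (f r)) * `|\det (\matrix_(r, c) h (f r) c)| ^+ 2.
Proof.
have -> : (k`!%:R : C) = \sum_(s : 'S_k) 1 by rewrite sumr_const card_Sn.
rewrite big_distrl /=.
under eq_bigr => s _ do rewrite mul1r (det_gram_ffun_perm s).
rewrite exchange_big /=; apply: eq_bigr => f _.
rewrite normCK -big_distrl /= mulrA; congr (_ * _).
set M := \matrix_(r, c) h (f r) c.
have prod_perm (s : 'S_k) : \prod_r (b (f (s r)) * h (f (s r)) r) =
    (\prod_r b (f r)) * \prod_r M (s r) r.
  rewrite big_split /=; congr (_ * _).
    by rewrite [RHS](reindex_inj (@perm_inj _ s)).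
  by apply: eq_bigr => r _; rewrite mxE.
under eq_bigr => s _ do rewrite prod_perm mulrCA.
rewrite -big_distrr /= -det_tr /determinant; congr (_ * _).
by apply: eq_bigr => s _; congr (_ * _); apply: eq_bigr => r _; rewrite !mxE.
Qed.

End GramDeterminant.

Lemma sumr_mul_gt0 (R : numDomainType) (I : finType) (a y : I -> R) :
  (forall i, 0 <= a i) -> (forall i, 0 < y i) ->
  0 < \sum_i a i -> 0 < \sum_i a i * y i.
Proof.
move=> a0 y0 a_gt0.
have ay0 i : 0 <= a i * y i by rewrite mulr_ge0 ?(ltW (y0 i)).
rewrite lt_def sumr_ge0 // andbT; apply: contraTneq a_gt0 => ay_eq0.
rewrite big1 ?ltxx // => i _.
have /eqP := @psumr_eq0P _ _ xpredT _ (fun i _ => ay0 i) ay_eq0 i isT.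
by rewrite mulf_eq0 (gt_eqF (y0 i)) orbF => /eqP.
Qed.

Section LogConvexity.
Variable R : realType.

Lemma powR_young (a b t : R) : 0 <= a -> 0 <= b -> 0 < t < 1 ->
  a `^ (1 - t) * b `^ t <= (1 - t) * a + t * b.
Proof.
move=> a0 b0 /andP[t0 t1].
have t1' : 0 < 1 - t by rewrite subr_gt0.
have := @conjugate_powR R (a `^ (1 - t)) (b `^ t) (1 - t)^-1 t^-1
  (powR_ge0 _ _) (powR_ge0 _ _)
  (eqbRL (invr_gt0 _) t1') (eqbRL (invr_gt0 _) t0).
rewrite !invrK -!powRrM !divff ?gt_eqF // !powRr1 // subrK => /(_ erefl).
by rewrite [_ * (1 - t)]mulrC [b * t]mulrC.
Qed.

Lemma powR_young_scaled (u v P Q t : R) :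
  0 <= u -> 0 <= v -> 0 < P -> 0 < Q -> 0 < t < 1 ->
  u `^ (1 - t) * v `^ t <=
  P `^ (1 - t) * Q `^ t * ((1 - t) * (u / P) + t * (v / Q)).
Proof.
move=> u0 v0 P0 Q0 t01.
have -> : u = P * (u / P) by rewrite mulrC divfK ?gt_eqF.
have -> : v = Q * (v / Q) by rewrite mulrC divfK ?gt_eqF.
rewrite [P * _ / P]mulrC [Q * _ / Q]mulrC !mulKf ?gt_eqF //.
rewrite (powRM _ (ltW P0) (divr_ge0 u0 (ltW P0))).
rewrite (powRM _ (ltW Q0) (divr_ge0 v0 (ltW Q0))).
rewrite mulrACA; apply: ler_wpM2l; first by rewrite mulr_ge0 ?powR_ge0.
by apply: powR_young => //; apply: divr_ge0 => //; exact: ltW.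
Qed.

Lemma sum_powR_holder (I : finType) (a y : I -> R) t :
  (forall i, 0 <= a i) -> (forall i, 0 < y i) -> 0 < t < 1 ->
  \sum_i a i * y i `^ t <=
  (\sum_i a i) `^ (1 - t) * (\sum_i a i * y i) `^ t.
Proof.
move=> a0 y0 t01; set P := \sum_i a i; set Q := \sum_i a i * y i.
have ay0 i : 0 <= a i * y i by rewrite mulr_ge0 ?(ltW (y0 i)).
have [P0|P_neq0] := eqVneq P 0.
  rewrite big1 ?mulr_ge0 ?powR_ge0 // => i _.
  by rewrite (psumr_eq0P (fun i _ => a0 i) P0) ?mul0r.
have P_gt0 : 0 < P by rewrite lt_def P_neq0 sumr_ge0.
have Q_gt0 : 0 < Q by apply: sumr_mul_gt0.
have split_pow i : a i * y i `^ t = a i `^ (1 - t) * (a i * y i) `^ t.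
  rewrite powRM ?(ltW (y0 i)) // mulrA -powRD; last by rewrite subrK oner_eq0.
  by rewrite subrK powRr1.
under eq_bigr do rewrite split_pow.
apply: le_trans (ler_sum _ (fun i _ =>
  powR_young_scaled (a0 i) (ay0 i) P_gt0 Q_gt0 t01)) _.
rewrite -big_distrr /= big_split /= -!big_distrr /= -!mulr_suml.
by rewrite -/P -/Q !divff ?gt_eqF // !mulr1 subrK mulr1.
Qed.

Lemma ln_sum_powR_convex (I : finType) (a y : I -> R) t :
  (forall i, 0 <= a i) -> (forall i, 0 < y i) -> 0 <= t <= 1 ->
  ln (\sum_i a i * y i `^ t) <=
  (1 - t) * ln (\sum_i a i * y i `^ 0) + t * ln (\sum_i a i * y i `^ 1).
Proof.
move=> a0 y0 /andP[t0 t1].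
have [->|t_neq0] := eqVneq t 0; first by rewrite subr0 mul1r mul0r addr0.
have [->|t_neq1] := eqVneq t 1; first by rewrite subrr mul0r add0r mul1r.
have t01 : 0 < t < 1 by rewrite !lt_def t0 t1 t_neq0 eq_sym t_neq1.
set P := \sum_i a i; set Q := \sum_i a i * y i.
have -> : \sum_i a i * y i `^ 0 = P.
  by apply: eq_bigr => i _; rewrite powRr0 mulr1.
have -> : \sum_i a i * y i `^ 1 = Q.
  by apply: eq_bigr => i _; rewrite powRr1 ?(ltW (y0 i)).
have [P0|P_neq0] := eqVneq P 0.
  have a_eq0 i : a i = 0 by rewrite (psumr_eq0P (fun i _ => a0 i) P0).
  by rewrite P0 /Q !big1 ?ln0 ?mulr0 ?addr0 // => i _; rewrite a_eq0 mul0r.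
have P_gt0 : 0 < P by rewrite lt_def P_neq0 sumr_ge0.
have Q_gt0 : 0 < Q by apply: sumr_mul_gt0.
have ay_gt0 : 0 < \sum_i a i * y i `^ t.
  by apply: sumr_mul_gt0 => // i; rewrite powR_gt0.
rewrite -ln_powR -[t * ln Q]ln_powR -lnM ?posrE ?powR_gt0 // ler_ln ?posrE //.
  exact: sum_powR_holder.
by rewrite mulr_gt0 ?powR_gt0.
Qed.

Lemma prodr_powR (I : finType) (x : I -> R) t :
  (forall i, 0 <= x i) -> \prod_i x i `^ t = (\prod_i x i) `^ t.
Proof.
move=> x0; elim: (index_enum I) => [|i s IH]; first by rewrite !big_nil powR1.
by rewrite !big_cons IH powRM ?prodr_ge0.
Qed.

End LogConvexity.

Section HermitianMatrices.
Variable R : realType.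
Local Notation C := R[i].

Lemma hermsymmx_trmxC n (A : 'M[C]_n) : A \is hermsymmx -> A^t* = A.
Proof. by move/is_hermitianmxP => {2}->; rewrite expr0 scale1r. Qed.

Lemma trmxC_hermsymmx n (A : 'M[C]_n) : A^t* = A -> A \is hermsymmx.
Proof. by move=> AE; apply/is_hermitianmxP; rewrite expr0 scale1r AE. Qed.

Lemma trmxC_mul m n p (M : 'M[C]_(m, n)) (N : 'M[C]_(n, p)) :
  (M *m N)^t* = N^t* *m M^t*.
Proof. by rewrite trmx_mul map_mxM. Qed.

Lemma conj_real_complex (x : R) : (x%:C%C)^* = x%:C%C :> C.
Proof.
apply: conj_Creal; rewrite realE !lecE /= eqxx /=.
by case: (lerP 0 x) => // /ltW ->; rewrite orbT.
Qed.

Lemma gtc0_real (z : C) : 0 < z -> z = (complex.Re z)%:C%C /\ 0 < complex.Re z.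
Proof. by case: z => a b; rewrite ltcE /= => /andP[/eqP -> h]. Qed.

Lemma gec0_real (z : C) :
  0 <= z -> z = (complex.Re z)%:C%C /\ 0 <= complex.Re z.
Proof. by case: z => a b; rewrite lecE /= => /andP[/eqP -> h]. Qed.

Lemma sqr_normC_real (z : C) :
  `|z| ^+ 2 = (complex.Re (`|z| ^+ 2))%:C%C /\ 0 <= complex.Re (`|z| ^+ 2).
Proof. exact/gec0_real/exprn_ge0. Qed.

Lemma diag_gram_mx p n (V : 'M[C]_(p, n)) (c : 'I_n -> C) :
  V *m diag_mx (\row_j c j) *m V^t* = gram_mx c (fun j r => V r j).
Proof.
apply/matrixP => r q; rewrite mul_mx_diag !mxE; apply: eq_bigr => j _.
by rewrite !mxE mulrCA mulrA.
Qed.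

Lemma hermsymmx_spectral n (A : 'M[C]_n) : A \is hermsymmx ->
  A = (spectralmx A)^t* *m diag_mx (spectral_diag A) *m spectralmx A.
Proof.
move=> A_herm; rewrite -invmx_unitary ?spectral_unitarymx //.
exact/orthomx_spectralP/hermitian_normalmx.
Qed.

Lemma spectral_diag_quadform n (A : 'M[C]_n) (j : 'I_n) : A \is hermsymmx ->
  let x := (spectralmx A)^t* *m delta_mx j (0 : 'I_1) in
  (x^t* *m A *m x) 0 0 = spectral_diag A 0 j /\ x != 0.
Proof.
move=> A_herm x; set P := spectralmx A.
have PPt : P *m P^t* = 1%:M by apply/unitarymxP/spectral_unitarymx.
have delta_trmxC : (delta_mx j (0 : 'I_1) : 'cV[C]_n)^t* = delta_mx 0 j.
  apply/matrixP => i l; rewrite !mxE.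
  by case: (_ == _); case: (_ == _); rewrite /= ?conjC1 ?conjC0.
split.
  rewrite /x trmxC_mul trmxCK delta_trmxC {2}(hermsymmx_spectral A_herm).
  rewrite !mulmxA -(mulmxA _ P) PPt mulmx1 -(mulmxA _ P) PPt mulmx1.
  by rewrite -rowE -colE !mxE eqxx mulr1n.
apply/eqP => x0.
have : P *m x = 0 by rewrite x0 mulmx0.
rewrite /x mulmxA PPt mul1mx => /matrixP /(_ j 0); rewrite !mxE !eqxx /=.
by move/eqP; rewrite oner_eq0.
Qed.

Definition eigenr n (A : 'M[C]_n) (j : 'I_n) : R :=
  complex.Re (spectral_diag A 0 j).

Lemma pdmx_eigenr n (A : 'M[C]_n) j : pdmx A ->
  spectral_diag A 0 j = (eigenr A j)%:C%C /\ 0 < eigenr A j.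
Proof.
move=> [A_herm A_pos]; have [E x_neq0] := spectral_diag_quadform j A_herm.
by rewrite /eigenr -E; apply: gtc0_real; apply: A_pos.
Qed.

Lemma psdmx_eigenr n (A : 'M[C]_n) j : psdmx A ->
  spectral_diag A 0 j = (eigenr A j)%:C%C /\ 0 <= eigenr A j.
Proof.
move=> [A_herm A_nneg]; have [E _] := spectral_diag_quadform j A_herm.
by rewrite /eigenr -E; apply: gec0_real; apply: A_nneg.
Qed.

Lemma pdmx_psdmx n (A : 'M[C]_n) : pdmx A -> psdmx A.
Proof.
move=> [A_herm A_pos]; split => // x.
have [->|x_neq0] := eqVneq x 0; last exact/ltW/A_pos.
by rewrite mulmx0 mxE.
Qed.

Lemma pdmx_congr n (Y S : 'M[C]_n) : pdmx Y -> S \in unitmx ->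
  pdmx (S^t* *m Y *m S).
Proof.
move=> [Y_herm Y_pos] S_unit; split.
  apply: trmxC_hermsymmx.
  by rewrite !trmxC_mul trmxCK (hermsymmx_trmxC Y_herm) mulmxA.
move=> x x_neq0; rewrite -!mulmxA mulmxA -trmxC_mul mulmxA; apply: Y_pos.
by apply: contra x_neq0 => /eqP Sx0; rewrite -(mulKmx S_unit x) Sx0 mulmx0.
Qed.

Lemma mxpowrE n (A : 'M[C]_n) t : mxpowr A t =
  (spectralmx A)^t* *m diag_mx (\row_j (eigenr A j `^ t)%:C%C) *m
  spectralmx A.
Proof. by rewrite /mxpowr invmx_unitary ?spectral_unitarymx. Qed.

Lemma mxpowr0 n (A : 'M[C]_n) : mxpowr A 0 = 1%:M.
Proof.
rewrite /mxpowr (_ : diag_mx _ = 1%:M) ?mulmx1 ?mulVmx ?unitarymx_unit //.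
  exact: spectral_unitarymx.
by apply/matrixP => i j; rewrite !mxE powRr0; case: (i == j).
Qed.

Lemma mxpowrD n (A : 'M[C]_n) s t : pdmx A ->
  mxpowr A s *m mxpowr A t = mxpowr A (s + t).
Proof.
move=> A_pd; rewrite /mxpowr -!mulmxA (mulmxA (spectralmx A)).
rewrite mulmxV ?unitarymx_unit ?spectral_unitarymx //.
rewrite mul1mx (mulmxA (diag_mx _)) mulmx_diag mulmxA.
suff -> : \row_j ((\row_j (eigenr A j `^ s)%:C%C) 0 j *
    (\row_j (eigenr A j `^ t)%:C%C) 0 j) =
  \row_j (eigenr A j `^ (s + t))%:C%C :> 'rV[C]_n by rewrite [RHS]mulmxA.
apply/rowP => j; rewrite !mxE -rmorphM powRD // implybE.
by rewrite (gt_eqF (pdmx_eigenr j A_pd).2) orbT.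
Qed.

Lemma mxpowr1 n (A : 'M[C]_n) : psdmx A -> mxpowr A 1 = A.
Proof.
move=> A_psd; rewrite [RHS](hermsymmx_spectral A_psd.1) -invmx_unitary.
  congr (_ *m diag_mx _ *m _); apply/rowP => j.
  by rewrite !mxE powRr1 -?(psdmx_eigenr j A_psd).1 ?(psdmx_eigenr j A_psd).2.
exact: spectral_unitarymx.
Qed.

Lemma mxpowr_trmxC n (A : 'M[C]_n) t : (mxpowr A t)^t* = mxpowr A t.
Proof.
rewrite mxpowrE !trmxC_mul trmxCK mulmxA tr_diag_mx map_diag_mx.
congr (_ *m diag_mx _ *m _); apply/rowP => j.
by rewrite !mxE; exact: conj_real_complex.
Qed.

End HermitianMatrices.

Section GramPowR.
Variable R : realType.
Local Notation C := R[i].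
Variables (I : finType) (k : nat) (alpha x : I -> R) (h : I -> 'I_k -> C).

Definition gram_coef (f : {ffun 'I_k -> I}) : R :=
  k`!%:R^-1 *
  (\prod_r alpha (f r) * complex.Re (`|\det (\matrix_(r, q) h (f r) q)| ^+ 2)).

Lemma gram_coef_ge0 f : (forall l, 0 <= alpha l) -> 0 <= gram_coef f.
Proof.
move=> alpha0; rewrite /gram_coef mulr_ge0 ?invr_ge0 ?ler0n // mulr_ge0 //.
  exact: prodr_ge0.
by have [_] := sqr_normC_real (\det (\matrix_(r, q) h (f r) q)).
Qed.

Lemma det_gram_powR s : (forall l, 0 < x l) ->
  \det (gram_mx (fun l => (alpha l * x l `^ s)%:C%C) h) =
  (\sum_(f : {ffun 'I_k -> I}) gram_coef f * (\prod_r x (f r)) `^ s)%:C%C.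
Proof.
move=> x_gt0.
have kf_neq0 : (k`!%:R : R) != 0 by rewrite pnatr_eq0 -lt0n fact_gt0.
apply: (@mulfI _ (k`!%:R%:C%C)).
  by rewrite -(rmorph0 (real_complex R)) (inj_eq (@complexI R)).
rewrite [in LHS]rmorph_nat det_gram -rmorphM big_distrr rmorph_sum /=.
apply: eq_bigr => f _.
have [-> _] := sqr_normC_real (\det (\matrix_(r, q) h (f r) q)).
rewrite -rmorph_prod big_split /= prodr_powR => [|r]; last exact/ltW/x_gt0.
rewrite -rmorphM; congr (_%:C%C).
by rewrite /gram_coef !mulrA mulfV // mul1r mulrAC.
Qed.

Definition logdet_gram_powR s : R :=
  logdet (gram_mx (fun l => (alpha l * x l `^ s)%:C%C) h).

Lemma logdet_gram_powR_convex t :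
  (forall l, 0 <= alpha l) -> (forall l, 0 < x l) -> 0 <= t <= 1 ->
  logdet_gram_powR t <=
  (1 - t) * logdet_gram_powR 0 + t * logdet_gram_powR 1.
Proof.
move=> alpha0 x_gt0 t01; rewrite /logdet_gram_powR /logdet !det_gram_powR //=.
apply: ln_sum_powR_convex => // f; first exact: gram_coef_ge0.
by apply: prodr_gt0 => r _.
Qed.

End GramPowR.

Lemma mulmx_sandwich (F : pzRingType) n (S T Y : 'M[F]_n) :
  S *m T = 1%:M -> T *m S = 1%:M -> S *m (T *m Y *m T) *m S = Y.
Proof. by move=> ST TS; rewrite !mulmxA ST mul1mx -mulmxA TS mulmx1. Qed.

Section GeometricMean.
Variable R : realType.
Local Notation C := R[i].
Variables (d : nat) (X Y : 'M[C]_d).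
Hypotheses (X_pd : pdmx X) (Y_pd : pdmx Y).

Lemma mxpowr_unit t : mxpowr X t \in unitmx.
Proof.
have X_inv := mxpowrD t (- t) X_pd.
rewrite subrr mxpowr0 in X_inv.
exact: (mulmx1_unit X_inv).1.
Qed.

Lemma pdmx_congr_mxpowr t : pdmx (mxpowr X t *m Y *m mxpowr X t).
Proof. rewrite -{1}mxpowr_trmxC; exact: pdmx_congr Y_pd (mxpowr_unit t). Qed.

Lemma geomean0 : geomean X Y 0 = X.
Proof.
have half_half : 2^-1 + 2^-1 = 1 :> R by rewrite [RHS](splitr 1) mul1r.
rewrite /geomean /= mxpowr0 mulmx1 mxpowrD // half_half.
exact/mxpowr1/pdmx_psdmx.
Qed.

Lemma geomean1 : geomean X Y 1 = Y.
Proof.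
rewrite /geomean /= mxpowr1; last exact/pdmx_psdmx/pdmx_congr_mxpowr.
by apply: mulmx_sandwich; rewrite mxpowrD // (subrr, addNr) mxpowr0.
Qed.

Lemma geomean_congr_diag : exists (W : 'M[C]_d) (c : 'I_d -> R),
  (forall j, 0 < c j) /\
  forall t, geomean X Y t = W *m diag_mx (\row_j (c j `^ t)%:C%C) *m W^t*.
Proof.
have Z_pd := pdmx_congr_mxpowr (- 2^-1); set Z := _ *m Y *m _ in Z_pd.
exists (mxpowr X (2^-1) *m (spectralmx Z)^t*), (eigenr Z).
split=> [j|t]; first exact: (pdmx_eigenr j Z_pd).2.
rewrite /geomean /= -/Z (mxpowrE Z) trmxC_mul trmxCK mxpowr_trmxC.
(* Abstracting S keeps mulmxA from unfolding mxpowr, itself a product. *)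
by move: (mxpowr X _) => S; rewrite !mulmxA.
Qed.

End GeometricMean.

Section CongruenceSum.
Variable R : realType.
Local Notation C := R[i].
Variables (k m d : nat) (A : 'I_m -> 'M[C]_(d, k)) (V : 'M[C]_k) (W : 'M[C]_d).
Variables (sg : 'I_k -> R) (c : 'I_d -> R).
Local Notation I := ('I_k + 'I_m * 'I_d)%type.

(* The rank-one terms are indexed by the columns j of V, with weight sg j,
   and by the pairs (i, j) for the columns of A_i^* W, with weight c_j^s. *)

Definition congr_weight (l : I) : R :=
  match l with inl j => sg j | inr _ => 1 end.

Definition congr_base (l : I) : R :=
  match l with inl _ => 1 | inr p => c p.2 end.

Definition congr_vec (l : I) : 'I_k -> C :=
  match l with
  | inl j => fun r => V r j
  | inr p => fun r => ((A p.1)^t* *m W) r p.2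
  end.

Lemma congr_weight_ge0 l : (forall j, 0 <= sg j) -> 0 <= congr_weight l.
Proof. by case: l => [j|p] /=. Qed.

Lemma congr_base_gt0 l : (forall j, 0 < c j) -> 0 < congr_base l.
Proof. by case: l => [j|p] /=. Qed.

Lemma congr_sum_gram s :
  V *m diag_mx (\row_j (sg j)%:C%C) *m V^t* +
  \sum_i (A i)^t* *m (W *m diag_mx (\row_j (c j `^ s)%:C%C) *m W^t*) *m A i =
  gram_mx (fun l => (congr_weight l * congr_base l `^ s)%:C%C) congr_vec.
Proof.
have congr_gram i :
    (A i)^t* *m (W *m diag_mx (\row_j (c j `^ s)%:C%C) *m W^t*) *m A i =
    gram_mx (fun j => (c j `^ s)%:C%C) (fun j r => ((A i)^t* *m W) r j).
  by rewrite -diag_gram_mx trmxC_mul trmxCK !mulmxA.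
under eq_bigr do rewrite congr_gram.
rewrite diag_gram_mx; apply/matrixP => r q.
rewrite !mxE big_sumType summxE /=; congr (_ + _).
  by apply: eq_bigr => j _; rewrite powR1 mulr1.
rewrite (eq_bigr (fun i => \sum_j (c j `^ s)%:C%C *
  (((A i)^t* *m W) r j * (((A i)^t* *m W) q j)^*))) => [|i _]; last first.
  by rewrite mxE.
by rewrite pair_bigA; apply: eq_bigr => -[i j] _ /=; rewrite mul1r.
Qed.

End CongruenceSum.

Theorem corollary8 (R : realType) (d k m : nat)
  (A : 'I_m -> 'M[R[i]]_(d, k)) (B : 'M[R[i]]_k) :
  (k <= d)%N ->
  \rank (\mxcol_(i < m) A i) = k ->
  psdmx B ->
  geodesically_convex
    (fun X : 'M[R[i]]_d => logdet (B + \sum_(i < m) (A i)^t* *m X *m A i)).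
Proof.
(* The hypotheses k <= d and rank = k only make the determinant positive;
   since ln 0 = 0, the argument goes through without them. *)
move=> _ _ B_psd X Y t X_pd Y_pd t01.
pose phi Z := logdet (B + \sum_(i < m) (A i)^t* *m Z *m A i).
change (phi (geomean X Y t) <= (1 - t) * phi X + t * phi Y).
have [W [c [c_gt0 geomeanE]]] := geomean_congr_diag X_pd Y_pd.
(* The weights eigenr B j `^ 1 are those of mxpowr B 1 = B. *)
pose V := (spectralmx B)^t*; pose sg j := eigenr B j `^ 1.
have BE : B = V *m diag_mx (\row_j (sg j)%:C%C) *m V^t*.
  by rewrite trmxCK -mxpowrE (mxpowr1 B_psd).
have phiE s : phi (geomean X Y s) =
    logdet_gram_powR (congr_weight sg) (congr_base c) (congr_vec A V W) s.
  by rewrite /phi geomeanE {1}BE congr_sum_gram.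
have := logdet_gram_powR_convex (congr_vec A V W)
  (fun l => congr_weight_ge0 (sg := sg) l (fun j => powR_ge0 _ _))
  (fun l => congr_base_gt0 l c_gt0) t01.
by rewrite -(phiE t) -(phiE 0) -(phiE 1) (geomean0 Y X_pd) (geomean1 X_pd Y_pd).
Qed.
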